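(* Let $m\geq 3$, let $\mathcal{S}$ be a locating-dominating set of the grid graph $G_{3,m}=P_3\square P_m$, and let $\mathcal{B}$ be a $(3\times 3)$-block of $G_{3,m}$. Then $|\mathcal{B}\cap\mathcal{S}|\geq 2$.
   Context: $P_n$ is the path on $n$ vertices, $\square$ the Cartesian product of graphs, and $G_{n,m}=P_n\square P_m$ is viewed as a grid with $n$ rows and $m$ columns. A $(n\times \ell)$-block of $G_{n,m}$ is the set of vertices in $\ell$ consecutive columns. For $C\subseteq V(G)$ and $v\in V(G)$ let $I(v)=N[v]\cap C$ ($N[v]$ the closed neighborhood). $C$ is a locating-dominating set if $I(v)\neq\emptyset$ for all $v\in V(G)\setminus C$ and $I(u)\neq I(v)$ for all distinct $u,v\in V(G)\setminus C$. *)

From mathcomp Require Import all_boot.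
Set Implicit Arguments. Unset Strict Implicit. Unset Printing Implicit Defensive.

(* Grid graph G_{n,m} = P_n □ P_m: vertex (i,j) with row i < n, column j < m. *)
Definition grid_vertex (n m : nat) := ('I_n * 'I_m)%type.

Definition nat_dist (a b : nat) : nat := (a - b) + (b - a).

Definition grid_adj (n m : nat) (u v : grid_vertex n m) : bool :=
  ((u.1 == v.1 :> nat) && (nat_dist u.2 v.2 == 1))
  || ((u.2 == v.2 :> nat) && (nat_dist u.1 v.1 == 1)).

Definition closed_nbhd (n m : nat) (v : grid_vertex n m) : {set grid_vertex n m} :=
  [set u | (u == v) || grid_adj u v].

Definition I_code (n m : nat) (C : {set grid_vertex n m}) (v : grid_vertex n m) :=
  closed_nbhd v :&: C.

Definition locating_dominating (n m : nat) (C : {set grid_vertex n m}) : Prop :=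
  (forall v, v \notin C -> I_code C v != set0) /\
  (forall u v, u \notin C -> v \notin C -> u != v -> I_code C u != I_code C v).

Definition block (n m j0 l : nat) : {set grid_vertex n m} :=
  [set v : grid_vertex n m | (j0 <= v.2) && (v.2 < j0 + l)].

From mathcomp Require Import all_boot.
From mathcomp Require Import zify.

Set Implicit Arguments.
Unset Strict Implicit.
Unset Printing Implicit Defensive.

(* If the block held at most one vertex of S, its middle column would contain
   two vertices outside S; their closed neighbourhoods lie inside the block, so
   both codes are nonempty subsets of a set with at most one element, hence
   equal, contradicting the locating property. *)

Definition column (n m : nat) (c : 'I_m) : {set grid_vertex n m} :=
  [set (i, c) | i : 'I_n].

Lemma card_column (n m : nat) (c : 'I_m) : #|column n c| = n.
Proof. by rewrite card_imset ?card_ord // => i k []. Qed.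

Lemma closed_nbhd_sub_block (n m j0 l : nat) (v : grid_vertex n m) :
  j0 < v.2 -> v.2.+1 < j0 + l -> closed_nbhd v \subset block n m j0 l.
Proof.
move=> lo hi; apply/subsetP => u; rewrite !inE => /orP[/eqP -> | ]; first lia.
by rewrite /grid_adj /nat_dist; case/orP => /andP[/eqP e1 /eqP e2]; lia.
Qed.

Lemma subset_card_le1_eq (T : finType) (A B : {set T}) :
  A \subset B -> A != set0 -> #|B| <= 1 -> A = B.
Proof.
move=> sAB; rewrite -card_gt0 => nA cB; apply/eqP.
by rewrite eqEcard sAB (leq_trans cB nA).
Qed.

Lemma locating_dominating_unique_inside (n m : nat) (S T : {set grid_vertex n m})
    (u v : grid_vertex n m) :
  locating_dominating S -> #|T :&: S| <= 1 ->
  u \notin S -> v \notin S -> closed_nbhd u \subset T -> closed_nbhd v \subset T ->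
  u = v.
Proof.
move=> [dom loc] small uS vS uT vT.
have code_eq w : w \notin S -> closed_nbhd w \subset T -> I_code S w = T :&: S.
  by move=> wS wT; apply: subset_card_le1_eq (dom w wS) small; exact: setSI.
case: (eqVneq u v) => // /(loc u v uS vS).
by rewrite !code_eq // eqxx.
Qed.

Theorem lemma4p10 (m : nat) (S : {set grid_vertex 3 m}) (j0 : nat) :
  3 <= m -> locating_dominating S -> j0 + 3 <= m ->
  2 <= #|block 3 m j0 3 :&: S|.
Proof.
move=> _ ldS fit; set B := block 3 m j0 3.
rewrite ltnNge; apply/negP => small.
have mid : j0.+1 < m by lia.
set C := column 3 (Ordinal mid).
have nbhdCB v : v \in C -> closed_nbhd v \subset B.
  by case/imsetP => i _ ->; apply: closed_nbhd_sub_block => /=; lia.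
have CB : C \subset B.
  by apply/subsetP => v Cv; apply: (subsetP (nbhdCB v Cv)); rewrite !inE eqxx.
have outside : 1 < #|C :\: S|.
  have := cardsID S C; rewrite card_column.
  have := subset_leq_card (setSI S CB); lia.
case/card_gt1P: outside => u [v [/setDP[Cu uS] /setDP[Cv vS] /eqP[]]].
exact: (locating_dominating_unique_inside ldS small uS vS (nbhdCB u Cu) (nbhdCB v Cv)).
Qed.
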